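(* $\mathfrak{t}((c_0^+\setminus \ell^1,\leq ^* ))=\mathfrak{t}$.
   Context: $c_0^+$ is the set of all sequences of positive reals converging to $0$, $\ell^1$ the set of real sequences with convergent sum, so $c_0^+\setminus\ell^1$ is the set of positive null sequences with divergent sum. For $\bar f,\bar g\in c_0^+\setminus\ell^1$, $\bar f\leq^*\bar g$ means $\{n: f_n>g_n\}$ is finite. For an ordering $P$, $\mathfrak{t}(P)$ is the least cardinal $\kappa$ such that there is a decreasing (well-ordered) chain of length $\kappa$ in $P$ with no lower bound in $P$. $\mathfrak{t}$ is the tower number, i.e. $\mathfrak{t}(([\omega]^\omega,\subseteq^* ))$: the least length of a $\subseteq^*$-decreasing well-ordered sequence of infinite subsets of $\omega$ with no infinite pseudo-intersection. *)

From Stdlib Require Import Reals Lra Wellfounded.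
Open Scope R_scope.

Definition strict_wellorder (I : Type) (lt : I -> I -> Prop) : Prop :=
  (forall i, ~ lt i i) /\
  (forall i j k, lt i j -> lt j k -> lt i k) /\
  (forall i j, lt i j \/ i = j \/ lt j i) /\
  well_founded lt.

Definition unbounded_decreasing_chain (T : Type) (S : T -> Prop)
  (le : T -> T -> Prop) (I : Type) (lt : I -> I -> Prop) : Prop :=
  exists f : I -> T,
    (forall i, S (f i)) /\
    (forall i j, lt i j -> le (f j) (f i)) /\
    ~ (exists b, S b /\ forall i, le b (f i)).

(** [tower_le P Q] : every unbounded decreasing well-ordered chain in P can be
    matched by one in Q whose index set has cardinality at most that of P's.
    [t(P) = t(Q)] is expressed as [tower_le P Q /\ tower_le Q P]. *)
Definition tower_le (T1 : Type) (S1 : T1 -> Prop) (le1 : T1 -> T1 -> Prop)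
  (T2 : Type) (S2 : T2 -> Prop) (le2 : T2 -> T2 -> Prop) : Prop :=
  forall (I : Type) (ltI : I -> I -> Prop),
    strict_wellorder I ltI ->
    unbounded_decreasing_chain T1 S1 le1 I ltI ->
    exists (J : Type) (ltJ : J -> J -> Prop),
      strict_wellorder J ltJ /\
      unbounded_decreasing_chain T2 S2 le2 J ltJ /\
      exists g : J -> I, forall x y, g x = g y -> x = y.

Definition tower_num_eq (T1 : Type) (S1 : T1 -> Prop) (le1 : T1 -> T1 -> Prop)
  (T2 : Type) (S2 : T2 -> Prop) (le2 : T2 -> T2 -> Prop) : Prop :=
  tower_le T1 S1 le1 T2 S2 le2 /\ tower_le T2 S2 le2 T1 S1 le1.

Definition c0plus_not_l1 (f : nat -> R) : Prop :=
  (forall n, 0 < f n) /\ Un_cv f 0 /\ ~ (exists l, infinite_sum f l).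

Definition seq_le_star (f g : nat -> R) : Prop :=
  exists N, forall n, (N <= n)%nat -> f n <= g n.

Definition infinite_subset (A : nat -> Prop) : Prop :=
  forall N, exists n, (N <= n)%nat /\ A n.

Definition subset_star (A B : nat -> Prop) : Prop :=
  exists N, forall n, A n -> ~ B n -> (n < N)%nat.

(* Both inequalities go through [omega]^omega.  A set A yields the sequence that is
   2^-k on the k-th dyadic block (of length 2^k) when k is in A and 4^-k otherwise;
   this turns towers into decreasing chains, and a lower bound b of the image gives
   the pseudo-intersection {k | b exceeds 4^-k somewhere on block k}.

   Conversely, let (f_i) be a chain with no lower bound.  A transfinite recursion
   builds a tower of sets, the i-th thinned out so that consecutive points outgrow
   the dyadic exponents of f_i and the places where f_i has accumulated mass 1/2;
   either the recursion gets stuck, which gives a shorter tower, or it has a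
   pseudo-intersection Z sparse for every f_i.  Cutting omega into blocks at the
   points of Z, every f_i eventually dominates, on each block, a dyadic pattern of
   mass at least 1/2 with bounded exponents.  The codes of the patterns below f_i
   form a tower, since a pseudo-intersection of them glues to a lower bound of
   (f_i) in c_0^+ \ l^1. *)

From Stdlib Require Import Reals Lra Lia Cantor List Wellfounded.
From Stdlib Require Import Classical ClassicalEpsilon FunctionalExtensionality
  ProofIrrelevance.
Open Scope R_scope.

(* [psum u n] has [n] terms, one fewer than [sum_f_R0 u n]. *)
Fixpoint psum (u : nat -> R) (n : nat) : R :=
  match n with O => 0 | S m => psum u m + u m end.

Lemma psum_sum_f_R0 (u : nat -> R) n : sum_f_R0 u n = psum u (S n).
Proof. induction n as [|n IH]; simpl in *; [lra|]. rewrite IH. simpl. lra. Qed.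

Lemma psum_ext (u v : nat -> R) n :
  (forall t, (t < n)%nat -> u t = v t) -> psum u n = psum v n.
Proof.
  induction n as [|n IH]; intros H; simpl; [lra|].
  rewrite IH by (intros; apply H; lia). rewrite H by lia. lra.
Qed.

Lemma psum_add (u : nat -> R) a n :
  psum u (a + n) = psum u a + psum (fun t => u (a + t)%nat) n.
Proof.
  induction n as [|n IH]; simpl; [rewrite Nat.add_0_r; lra|].
  rewrite Nat.add_succ_r. simpl. rewrite IH. lra.
Qed.

Lemma psum_le (u v : nat -> R) n :
  (forall t, (t < n)%nat -> u t <= v t) -> psum u n <= psum v n.
Proof.
  induction n as [|n IH]; intros H; simpl; [lra|].
  assert (psum u n <= psum v n) by (apply IH; intros; apply H; lia).
  specialize (H n ltac:(lia)). lra.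
Qed.

Lemma psum_const c n : psum (fun _ => c) n = INR n * c.
Proof. induction n as [|n IH]; simpl psum; [simpl; lra|]. rewrite IH, S_INR. lra. Qed.

Lemma psum_scal c (u : nat -> R) n : psum (fun t => c * u t) n = c * psum u n.
Proof. induction n as [|n IH]; simpl; [lra|]. rewrite IH. lra. Qed.

Section NonnegativeTerms.
Variable u : nat -> R.
Hypothesis u_ge0 : forall t, 0 <= u t.

Lemma psum_ge0 n : 0 <= psum u n.
Proof. induction n; simpl; [lra|]. specialize (u_ge0 n). lra. Qed.

Lemma psum_le_len m n : (m <= n)%nat -> psum u m <= psum u n.
Proof. induction 1 as [|n _ IH]; simpl; [lra|]. specialize (u_ge0 n). lra. Qed.

Lemma not_summable_of_psum_unbounded :
  (forall M, exists n, M <= psum u n) -> ~ exists l, infinite_sum u l.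
Proof.
  intros Hunb [l Hl].
  assert (Hb : forall n, psum u n <= l).
  { intros n. apply Rnot_lt_le. intros Hgt.
    destruct (Hl (psum u n - l)) as [N HN]; [lra|].
    specialize (HN (max N n) ltac:(lia)). rewrite psum_sum_f_R0 in HN.
    assert (psum u n <= psum u (S (max N n))) by (apply psum_le_len; lia).
    unfold Rdist in HN. rewrite Rabs_right in HN by lra. lra. }
  destruct (Hunb (l + 1)) as [n Hn]. specialize (Hb n). lra.
Qed.

Lemma summable_of_psum_bounded B :
  (forall n, psum u n <= B) -> exists l, infinite_sum u l.
Proof.
  intros Hb. destruct (growing_cv (sum_f_R0 u)) as [l Hl].
  - intros n. rewrite !psum_sum_f_R0. simpl. specialize (u_ge0 (S n)). lra.
  - exists B. intros x [i ->]. rewrite psum_sum_f_R0. apply Hb.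
  - exists l. exact Hl.
Qed.

End NonnegativeTerms.

Lemma half_pow_pos k : 0 < (1/2)^k.
Proof. apply pow_lt. lra. Qed.

Lemma half_pow_le a b : (a <= b)%nat -> (1/2)^b <= (1/2)^a.
Proof.
  induction 1 as [|b _ IH]; [lra|]. simpl. pose proof (half_pow_pos b). lra.
Qed.

Lemma half_pow_eventually_lt eps :
  0 < eps -> exists N, forall n, (N <= n)%nat -> (1/2)^n < eps.
Proof.
  intros He. destruct (pow_lt_1_zero (1/2)) with (y := eps) as [N HN];
    [rewrite Rabs_right; lra | assumption |].
  exists N. intros n Hn. specialize (HN n Hn).
  rewrite Rabs_right in HN by (apply Rle_ge, pow_le; lra). exact HN.
Qed.

Lemma psum_half_pow n : psum (fun k => (1/2)^k) n = 2 - 2 * (1/2)^n.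
Proof. induction n as [|n IH]; simpl psum; simpl; [lra|]. rewrite IH. lra. Qed.

Lemma Un_cv0_le_star (b f : nat -> R) :
  (forall n, 0 < b n) -> seq_le_star b f -> Un_cv f 0 -> Un_cv b 0.
Proof.
  intros Hb [N1 HN1] Hf eps He. destruct (Hf eps He) as [N2 HN2].
  exists (max N1 N2). intros n Hn.
  specialize (HN1 n ltac:(lia)). specialize (HN2 n ltac:(lia)). pose proof (Hb n).
  unfold Rdist in *. rewrite Rminus_0_r in *.
  rewrite Rabs_right in * by lra. lra.
Qed.

Definition block_partition (z : nat -> nat) : Prop :=
  z O = O /\ forall k, (z k < z (S k))%nat.

Definition block_len (z : nat -> nat) k : nat := (z (S k) - z k)%nat.

Section Blocks.
Variable z : nat -> nat.
Hypothesis Hz : block_partition z.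

Lemma block_partition_le a b : (a <= b)%nat -> (z a <= z b)%nat.
Proof. destruct Hz as [_ Hlt]. induction 1 as [|b _ IH]; [lia|]. specialize (Hlt b). lia. Qed.

Lemma block_partition_lt a b : (a < b)%nat -> (z a < z b)%nat.
Proof.
  intros Hab. pose proof (block_partition_le (S a) b Hab) as Hle. destruct Hz as [_ H].
  specialize (H a). lia.
Qed.

Lemma block_partition_ge k : (k <= z k)%nat.
Proof. destruct Hz as [_ H]. induction k; [lia|]. specialize (H k). lia. Qed.

Fixpoint block_of (n : nat) : nat :=
  match n with
  | O => O
  | S m => if Nat.leb (z (S (block_of m))) (S m) then S (block_of m) else block_of m
  end.

Lemma block_of_spec n : (z (block_of n) <= n < z (S (block_of n)))%nat.
Proof.
  destruct Hz as [H0 H]. induction n as [|n IH]; simpl.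
  - rewrite H0. specialize (H O). lia.
  - destruct (Nat.leb (z (S (block_of n))) (S n)) eqn:E.
    + apply Nat.leb_le in E. specialize (H (S (block_of n))). lia.
    + apply Nat.leb_gt in E. lia.
Qed.

Lemma block_of_eq k n : (z k <= n < z (S k))%nat -> block_of n = k.
Proof.
  intros Hn. pose proof (block_of_spec n).
  destruct (Nat.lt_trichotomy (block_of n) k) as [Hl|[He|Hl]]; [exfalso|exact He|exfalso].
  - pose proof (block_partition_le (S (block_of n)) k Hl). lia.
  - pose proof (block_partition_le (S k) (block_of n) Hl). lia.
Qed.

Lemma block_of_ge K n : (z K <= n)%nat -> (K <= block_of n)%nat.
Proof.
  intros Hn. pose proof (block_of_spec n).
  destruct (Compare_dec.le_lt_dec K (block_of n)) as [|Hl]; [assumption|].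
  pose proof (block_partition_le (S (block_of n)) K Hl). lia.
Qed.

Definition glue (w : nat -> nat -> R) (n : nat) : R :=
  w (block_of n) (n - z (block_of n))%nat.

Lemma glue_block w k t : (t < block_len z k)%nat -> glue w (z k + t) = w k t.
Proof.
  unfold glue, block_len. intros Ht.
  rewrite (block_of_eq k) by (pose proof (block_partition_lt k (S k)); lia).
  f_equal. lia.
Qed.

Lemma psum_blocks (u : nat -> R) K :
  psum u (z K) = psum (fun k => psum (fun t => u (z k + t)%nat) (block_len z k)) K.
Proof.
  induction K as [|K IH]; simpl.
  - destruct Hz as [H0 _]. rewrite H0. reflexivity.
  - rewrite <- IH. unfold block_len. pose proof (block_partition_lt K (S K)).
    replace (z (S K)) with (z K + (z (S K) - z K))%nat at 1 by lia.
    apply psum_add.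
Qed.

Lemma psum_glue w K :
  psum (glue w) (z K) = psum (fun k => psum (w k) (block_len z k)) K.
Proof.
  rewrite psum_blocks. apply psum_ext. intros k _.
  apply psum_ext. intros t Ht. apply glue_block, Ht.
Qed.

Lemma glue_not_summable w c :
  (forall k t, 0 <= w k t) -> 0 < c ->
  (forall K, exists k, (K <= k)%nat /\ c <= psum (w k) (block_len z k)) ->
  ~ exists l, infinite_sum (glue w) l.
Proof.
  intros Hw Hc Hheavy.
  assert (Hg : forall n, 0 <= glue w n) by (intros; apply Hw).
  apply not_summable_of_psum_unbounded; [exact Hg|].
  assert (Hm : forall m : nat, exists K, INR m * c <= psum (glue w) (z K)).
  { induction m as [|m [K HK]].
    - exists O. simpl. pose proof (psum_ge0 _ Hg (z O)). lra.
    - destruct (Hheavy K) as [k [Hk Hck]]. exists (S k).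
      rewrite psum_glue. simpl psum. rewrite <- psum_glue.
      pose proof (psum_le_len _ Hg _ _ (block_partition_le K k Hk)).
      rewrite S_INR. lra. }
  intros M. destruct (INR_unbounded (M / c)) as [m Hm'].
  destruct (Hm m) as [K HK]. exists (z K).
  apply Rlt_le in Hm'. apply (Rmult_le_compat_r c) in Hm'; [|lra].
  unfold Rdiv in Hm'. rewrite Rmult_assoc, Rinv_l, Rmult_1_r in Hm' by lra. lra.
Qed.

End Blocks.

Definition dyadic_points (k : nat) : nat := (2 ^ k - 1)%nat.

Lemma pow2_ge1 k : (1 <= 2 ^ k)%nat.
Proof. induction k; simpl; lia. Qed.

Lemma dyadic_points_partition : block_partition dyadic_points.
Proof.
  split; [reflexivity|]. intros k. unfold dyadic_points. simpl. pose proof (pow2_ge1 k). lia.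
Qed.

Lemma block_len_dyadic k : block_len dyadic_points k = (2 ^ k)%nat.
Proof. unfold block_len, dyadic_points. simpl. pose proof (pow2_ge1 k). lia. Qed.

Lemma pow2_mul_half_pow k : INR (2 ^ k) * (1/2)^k = 1.
Proof. rewrite pow_INR, <- Rpow_mult_distr. replace (INR 2 * (1/2)) with 1 by (simpl; lra). apply pow1. Qed.

Lemma pow2_mul_quarter_pow k : INR (2 ^ k) * (1/4)^k = (1/2)^k.
Proof. rewrite pow_INR, <- Rpow_mult_distr. f_equal. simpl INR. lra. Qed.

Lemma quarter_pow_pos k : 0 < (1/4)^k.
Proof. apply pow_lt. lra. Qed.

Lemma quarter_pow_le_half_pow k : (1/4)^k <= (1/2)^k.
Proof. apply pow_incr. lra. Qed.

(* The [k]-th dyadic block has length [2^k], so its sum is [1] for [k] in [A] and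
   [2^-k] otherwise. *)
Definition set_weight (A : nat -> Prop) (k : nat) : R :=
  if excluded_middle_informative (A k) then (1/2)^k else (1/4)^k.

Definition set_seq (A : nat -> Prop) : nat -> R :=
  glue dyadic_points (fun k _ => set_weight A k).

Lemma set_weight_pos A k : 0 < set_weight A k.
Proof. unfold set_weight. destruct excluded_middle_informative; [apply half_pow_pos|apply quarter_pow_pos]. Qed.

Lemma set_weight_le A k : set_weight A k <= (1/2)^k.
Proof. unfold set_weight. destruct excluded_middle_informative; [lra|apply quarter_pow_le_half_pow]. Qed.

Lemma set_seq_c0plus_not_l1 A : infinite_subset A -> c0plus_not_l1 (set_seq A).
Proof.
  intros HA. split; [|split].
  - intros n. apply set_weight_pos.
  - intros eps He. destruct (half_pow_eventually_lt eps He) as [N HN].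
    exists (dyadic_points N). intros n Hn.
    unfold Rdist. rewrite Rminus_0_r, Rabs_right by (apply Rle_ge, Rlt_le, set_weight_pos).
    eapply Rle_lt_trans; [apply set_weight_le|]. apply HN.
    apply block_of_ge; [apply dyadic_points_partition | lia].
  - apply (glue_not_summable _ dyadic_points_partition _ 1).
    + intros k _. apply Rlt_le, set_weight_pos.
    + lra.
    + intros K. destruct (HA K) as [k [Hk Ak]]. exists k. split; [exact Hk|].
      rewrite block_len_dyadic, psum_const, <- (pow2_mul_half_pow k).
      unfold set_weight. destruct excluded_middle_informative; [lra|contradiction].
Qed.

Lemma set_seq_le_star A B : subset_star A B -> seq_le_star (set_seq A) (set_seq B).
Proof.
  intros [N HN]. exists (dyadic_points N). intros n Hn. unfold set_seq, glue, set_weight.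
  pose proof (block_of_ge _ dyadic_points_partition N n Hn).
  destruct (excluded_middle_informative (A _)) as [Ha|Ha];
    destruct (excluded_middle_informative (B _)) as [Hb|Hb];
    [lra | specialize (HN _ Ha Hb); lia | apply quarter_pow_le_half_pow | lra].
Qed.

Definition heavy_blocks (b : nat -> R) (k : nat) : Prop :=
  ~ forall t, (t < 2 ^ k)%nat -> b (dyadic_points k + t)%nat <= (1/4)^k.

Lemma heavy_blocks_infinite b : c0plus_not_l1 b -> infinite_subset (heavy_blocks b).
Proof.
  intros [Hbp [_ Hbd]] N. apply NNPP. intros Hno. apply Hbd.
  set (B := fun k => psum (fun t => b (dyadic_points k + t)%nat) (block_len dyadic_points k)).
  assert (HB : forall k, (N <= k)%nat -> B k <= (1/2)^k).
  { intros k Hk. unfold B.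
    rewrite <- pow2_mul_quarter_pow, <- psum_const, <- block_len_dyadic. apply psum_le.
    intros t Ht. rewrite block_len_dyadic in Ht. apply NNPP. intros Hc.
    apply Hno. exists k. split; [exact Hk|]. intros Hall. apply Hc, Hall, Ht. }
  assert (Hb0 : forall n, 0 <= b n) by (intros; apply Rlt_le, Hbp).
  apply (summable_of_psum_bounded _ Hb0 (psum B N + 2)). intros n.
  apply Rle_trans with (psum b (dyadic_points (N + n))).
  { apply psum_le_len; [exact Hb0|].
    pose proof (block_partition_ge _ dyadic_points_partition (N + n)). lia. }
  rewrite (psum_blocks _ dyadic_points_partition). fold B.
  rewrite psum_add. pose proof (psum_add (fun k => (1/2)^k) N n) as Hsplit.
  rewrite psum_half_pow in Hsplit.
  pose proof (psum_ge0 (fun k => (1/2)^k) (fun k => Rlt_le _ _ (half_pow_pos k)) N).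
  pose proof (half_pow_pos (N + n)).
  assert (psum (fun t => B (N + t)%nat) n <= psum (fun t => (1/2)^(N + t)) n)
    by (apply psum_le; intros t _; apply HB; lia).
  lra.
Qed.

Lemma heavy_blocks_subset_star b A :
  seq_le_star b (set_seq A) -> subset_star (heavy_blocks b) A.
Proof.
  intros [N HN]. exists N. intros k Hk Ak. apply NNPP. intros HkN. apply Hk.
  intros t Ht. eapply Rle_trans; [apply HN|].
  - pose proof (block_partition_ge _ dyadic_points_partition k). lia.
  - unfold set_seq. rewrite glue_block by (apply dyadic_points_partition || (rewrite block_len_dyadic; exact Ht)).
    unfold set_weight. destruct excluded_middle_informative; [contradiction|lra].
Qed.

Lemma tower_le_sets_seqs :
  tower_le (nat -> Prop) infinite_subset subset_star (nat -> R) c0plus_not_l1 seq_le_star.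
Proof.
  intros I ltI Hwo [A [HAinf [HAdec HAnob]]].
  exists I, ltI. split; [exact Hwo|]. split.
  - exists (fun i => set_seq (A i)). split; [|split].
    + intros i. apply set_seq_c0plus_not_l1, HAinf.
    + intros i j Hij. apply set_seq_le_star, HAdec, Hij.
    + intros [b [Hb Hbl]]. apply HAnob. exists (heavy_blocks b). split.
      * apply heavy_blocks_infinite, Hb.
      * intros i. apply heavy_blocks_subset_star, Hbl.
  - exists (fun j => j). auto.
Qed.

Lemma subset_star_incl (A B C : nat -> Prop) :
  (forall n, A n -> B n) -> subset_star B C -> subset_star A C.
Proof. intros H [N HN]. exists N. intros n An Cn. apply HN; auto. Qed.

Definition sparse (e : nat -> nat) (X : nat -> Prop) : Prop :=
  exists N, forall x y, (N <= x)%nat -> X x -> X y -> (x < y)%nat ->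
    forall m, (m <= x)%nat -> (e m < y)%nat.

Lemma sparse_subset_star e X Y : subset_star Y X -> sparse e X -> sparse e Y.
Proof.
  intros [M HM] [N HN]. exists (max N M). intros x y Hx Yx Yy Hxy m Hm.
  assert (X x) by (apply NNPP; intros Hn; specialize (HM x Yx Hn); lia).
  assert (X y) by (apply NNPP; intros Hn; specialize (HM y Yy Hn); lia).
  apply (HN x y); auto. lia.
Qed.

Lemma bounded_upto (e : nat -> nat) x : exists B, forall m, (m <= x)%nat -> (e m < B)%nat.
Proof.
  induction x as [|x [B HB]].
  - exists (S (e O)). intros m Hm. replace m with O by lia. lia.
  - exists (S (max B (e (S x)))). intros m Hm.
    destruct (Nat.eq_dec m (S x)) as [->|]; [lia|]. specialize (HB m ltac:(lia)). lia.
Qed.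

Section Thinning.
Variables (e : nat -> nat) (Y : nat -> Prop).
Hypothesis HY : infinite_subset Y.

Definition next_above (x : nat) : nat :=
  epsilon (inhabits O) (fun y => Y y /\ (x < y)%nat /\ forall m, (m <= x)%nat -> (e m < y)%nat).

Lemma next_above_spec x :
  Y (next_above x) /\ (x < next_above x)%nat /\
  forall m, (m <= x)%nat -> (e m < next_above x)%nat.
Proof.
  unfold next_above. match goal with |- context [epsilon ?i ?P] => apply (epsilon_spec i P) end.
  destruct (bounded_upto e x) as [B HB].
  destruct (HY (S (max x B))) as [y [Hy Yy]]. exists y. split; [exact Yy|split; [lia|]].
  intros m Hm. specialize (HB m Hm). lia.
Qed.

Fixpoint thin_enum (k : nat) : nat :=
  match k with O => next_above O | S k' => next_above (thin_enum k') end.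

Definition thin (n : nat) : Prop := exists k, n = thin_enum k.

Lemma thin_enum_lt_S k : (thin_enum k < thin_enum (S k))%nat.
Proof. apply next_above_spec. Qed.

Lemma thin_enum_le a b : (a <= b)%nat -> (thin_enum a <= thin_enum b)%nat.
Proof. induction 1 as [|b _ IH]; [lia|]. pose proof (thin_enum_lt_S b). lia. Qed.

Lemma thin_enum_ge k : (k <= thin_enum k)%nat.
Proof. induction k; [lia|]. pose proof (thin_enum_lt_S k). lia. Qed.

Lemma thin_enum_in k : Y (thin_enum k).
Proof. destruct k; apply next_above_spec. Qed.

Lemma thin_subset n : thin n -> Y n.
Proof. intros [k ->]. apply thin_enum_in. Qed.

Lemma thin_infinite : infinite_subset thin.
Proof. intros N. exists (thin_enum N). split; [apply thin_enum_ge|exists N; reflexivity]. Qed.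

Lemma thin_sparse : sparse e thin.
Proof.
  exists O. intros x y _ [a ->] [b ->] Hab m Hm.
  assert (a < b)%nat.
  { destruct (Compare_dec.le_lt_dec b a) as [Hba|]; [|assumption].
    pose proof (thin_enum_le b a Hba). lia. }
  pose proof (thin_enum_le (S a) b H).
  pose proof (proj2 (proj2 (next_above_spec (thin_enum a))) m Hm). simpl in *. lia.
Qed.

End Thinning.

Definition set_tower_of_size (I : Type) : Prop :=
  exists (J : Type) (ltJ : J -> J -> Prop),
    strict_wellorder J ltJ /\
    unbounded_decreasing_chain (nat -> Prop) infinite_subset subset_star J ltJ /\
    exists g : J -> I, forall x y, g x = g y -> x = y.

Lemma wf_minimal (A : Type) (R : A -> A -> Prop) (P : A -> Prop) :
  well_founded R -> (exists x, P x) -> exists x, P x /\ forall y, R y x -> ~ P y.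
Proof.
  intros Hwf [x Hx]. revert Hx. induction x as [x IH] using (well_founded_ind Hwf). intros Hx.
  destruct (classic (exists y, R y x /\ P y)) as [[y [Hy Py]]|Hno].
  - apply (IH y Hy Py).
  - exists x. split; [assumption|]. intros y Hy Py. apply Hno. eauto.
Qed.

Lemma strict_wellorder_initial_segment (I : Type) (lt : I -> I -> Prop) (i0 : I) :
  strict_wellorder I lt ->
  strict_wellorder {j : I | lt j i0} (fun a b => lt (proj1_sig a) (proj1_sig b)).
Proof.
  intros [Hirr [Htr [Htot Hwf]]]. split; [|split; [|split]].
  - intros a. apply Hirr.
  - intros a b c. apply Htr.
  - intros [a Ha] [b Hb]. simpl. destruct (Htot a b) as [H|[H|H]]; auto.
    right; left. subst. f_equal. apply proof_irrelevance.
  - apply (Inverse_Image.wf_inverse_image _ _ lt (@proj1_sig _ _) Hwf).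
Qed.

Section ThinnedTower.
Variables (I : Type) (lt : I -> I -> Prop) (lt_wf : well_founded lt) (e : I -> nat -> nat).

(* If the earlier stages have no pseudo-intersection, [epsilon] picks junk; the
   hypothesis [reachable i] below guards every use. *)
Definition thinned_tower_step (i : I) (prev : forall j, lt j i -> nat -> Prop) : nat -> Prop :=
  thin (e i) (epsilon (inhabits (fun _ => True))
    (fun Y => infinite_subset Y /\ forall j (H : lt j i), subset_star Y (prev j H))).

Definition thinned_tower : I -> nat -> Prop :=
  Fix lt_wf (fun _ => nat -> Prop) thinned_tower_step.

Lemma thinned_tower_eq i :
  thinned_tower i = thinned_tower_step i (fun j _ => thinned_tower j).
Proof.
  apply (Fix_eq lt_wf (fun _ => nat -> Prop) thinned_tower_step).
  intros x f g Hfg. f_equal. apply functional_extensionality_dep. intro y.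
  apply functional_extensionality_dep. apply Hfg.
Qed.

Definition reachable (i : I) : Prop :=
  exists Y, infinite_subset Y /\ forall j, lt j i -> subset_star Y (thinned_tower j).

Lemma thinned_tower_spec i : reachable i ->
  infinite_subset (thinned_tower i) /\ sparse (e i) (thinned_tower i) /\
  forall j, lt j i -> subset_star (thinned_tower i) (thinned_tower j).
Proof.
  intros Hi. rewrite thinned_tower_eq. unfold thinned_tower_step.
  match goal with |- context [epsilon ?inh ?P] =>
    destruct (epsilon_spec inh P Hi) as [HY HYs]; set (Y := epsilon inh P) in * end.
  split; [apply thin_infinite, HY|split; [apply thin_sparse, HY|]].
  intros j Hj. apply subset_star_incl with Y.
  - apply thin_subset, HY.
  - apply HYs, Hj.
Qed.

End ThinnedTower.

Section TowerOrSparse.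
Variables (I : Type) (lt : I -> I -> Prop) (e : I -> nat -> nat).
Hypothesis Hwo : strict_wellorder I lt.

Let lt_wf : well_founded lt := proj2 (proj2 (proj2 Hwo)).
Let T := thinned_tower I lt lt_wf e.

(* The first stage with no pseudo-intersection below it ends a tower of smaller length. *)
Lemma set_tower_of_unreachable :
  (exists i, ~ reachable I lt lt_wf e i) -> set_tower_of_size I.
Proof.
  intros Hbad. destruct (wf_minimal I lt _ lt_wf Hbad) as [i0 [Hi0 Hmin]].
  assert (HG : forall j, lt j i0 -> reachable I lt lt_wf e j)
    by (intros j Hj; apply NNPP, Hmin, Hj).
  exists {j : I | lt j i0}, (fun a b => lt (proj1_sig a) (proj1_sig b)).
  split; [apply strict_wellorder_initial_segment, Hwo|split].
  - exists (fun a => T (proj1_sig a)). split; [|split].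
    + intros [j Hj]. apply (thinned_tower_spec I lt lt_wf e j (HG j Hj)).
    + intros [a Ha] [b Hb] Hab. apply (thinned_tower_spec I lt lt_wf e b (HG b Hb)), Hab.
    + intros [B [HB HBs]]. apply Hi0. exists B. split; [exact HB|].
      intros j Hj. apply (HBs (exist _ j Hj)).
  - exists (@proj1_sig _ _). intros [a Ha] [b Hb]. simpl. intros ->.
    f_equal. apply proof_irrelevance.
Qed.

Lemma set_tower_or_sparse_pseudo_intersection :
  set_tower_of_size I \/ exists Z, infinite_subset Z /\ forall i, sparse (e i) Z.
Proof.
  destruct (classic (exists i, ~ reachable I lt lt_wf e i)) as [Hbad|Hall].
  { left. apply set_tower_of_unreachable, Hbad. }
  assert (HG : forall i, reachable I lt lt_wf e i)
    by (intros i; apply NNPP; intros H; apply Hall; eauto).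
  pose proof (fun i => thinned_tower_spec I lt lt_wf e i (HG i)) as HT.
  destruct (classic (exists Z, infinite_subset Z /\ forall i, subset_star Z (T i)))
    as [[Z [HZ HZs]]|Hno].
  - right. exists Z. split; [exact HZ|]. intros i.
    apply sparse_subset_star with (T i); [apply HZs | apply HT].
  - left. exists I, lt. split; [exact Hwo|split].
    + exists T. split; [|split]; [apply HT | intros i j Hij; apply HT, Hij | exact Hno].
    + exists (fun i => i). auto.
Qed.

End TowerOrSparse.

Definition dyadic_exponent (x : R) : nat :=
  epsilon (inhabits O) (fun j => (1/2)^j <= x /\ (x <= 1 -> x <= 2 * (1/2)^j)).

Lemma dyadic_exponent_spec x : 0 < x ->
  (1/2)^(dyadic_exponent x) <= x /\ (x <= 1 -> x <= 2 * (1/2)^(dyadic_exponent x)).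
Proof.
  intros Hx. unfold dyadic_exponent.
  match goal with |- context [epsilon ?i ?P] => apply (epsilon_spec i P) end.
  destruct (half_pow_eventually_lt x Hx) as [N HN].
  destruct (wf_minimal nat lt (fun j => (1/2)^j <= x) Wf_nat.lt_wf) as [j [Hj Hmin]].
  { exists N. apply Rlt_le, HN. lia. }
  exists j. split; [exact Hj|]. intros Hx1. destruct j as [|j].
  - simpl. lra.
  - assert (~ (1/2)^j <= x) by (apply Hmin; lia). simpl. lra.
Qed.

Definition dyadic_floor (f : nat -> R) (n : nat) : R := (1/2)^(dyadic_exponent (f n)).

Lemma dyadic_floor_pos f n : 0 < dyadic_floor f n.
Proof. apply half_pow_pos. Qed.

Lemma dyadic_floor_psum_unbounded f :
  c0plus_not_l1 f -> forall M, exists n, M <= psum (dyadic_floor f) n.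
Proof.
  intros [Hp [Hc Hd]] M. apply NNPP. intros Hno.
  assert (Hlt : forall n, psum (dyadic_floor f) n < M)
    by (intros n; apply Rnot_le_lt; intros H; apply Hno; eauto).
  destruct (Hc 1) as [N0 HN0]; [lra|].
  assert (Hf : forall n, (N0 <= n)%nat -> f n <= 2 * dyadic_floor f n).
  { intros n Hn. specialize (HN0 n Hn). unfold Rdist in HN0.
    rewrite Rminus_0_r, Rabs_right in HN0 by (apply Rle_ge, Rlt_le, Hp).
    apply (dyadic_exponent_spec (f n) (Hp n)). lra. }
  assert (Hf0 : forall n, 0 <= f n) by (intros; apply Rlt_le, Hp).
  assert (Hu0 : forall n, 0 <= dyadic_floor f n) by (intros; apply Rlt_le, dyadic_floor_pos).
  apply Hd, (summable_of_psum_bounded _ Hf0 (psum f N0 + 2 * M)). intros n.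
  apply Rle_trans with (psum f (N0 + n)); [apply psum_le_len; [exact Hf0|lia]|].
  rewrite psum_add.
  assert (psum (fun t => f (N0 + t)%nat) n <= psum (fun t => 2 * dyadic_floor f (N0 + t)) n)
    by (apply psum_le; intros t _; apply Hf; lia).
  rewrite psum_scal in H. pose proof (psum_add (dyadic_floor f) N0 n).
  pose proof (Hlt (N0 + n)%nat). pose proof (psum_ge0 _ Hu0 N0). lra.
Qed.

Definition half_mass_end (f : nat -> R) (n : nat) : nat :=
  epsilon (inhabits O)
    (fun c => (n < c)%nat /\ 1/2 <= psum (fun t => dyadic_floor f (n + t)) (c - n)).

Lemma half_mass_end_spec f n : c0plus_not_l1 f ->
  (n < half_mass_end f n)%nat /\
  1/2 <= psum (fun t => dyadic_floor f (n + t)) (half_mass_end f n - n).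
Proof.
  intros Hf. unfold half_mass_end.
  match goal with |- context [epsilon ?i ?P] => apply (epsilon_spec i P) end.
  assert (Hu0 : forall n, 0 <= dyadic_floor f n) by (intros; apply Rlt_le, dyadic_floor_pos).
  destruct (dyadic_floor_psum_unbounded f Hf (psum (dyadic_floor f) n + 1/2)) as [m Hm].
  assert (Hnm : (n < m)%nat).
  { apply Nat.nle_gt. intros H. pose proof (psum_le_len _ Hu0 m n H). lra. }
  exists m. split; [exact Hnm|]. pose proof (psum_add (dyadic_floor f) n (m - n)) as Hadd.
  replace (n + (m - n))%nat with m in Hadd by lia. lra.
Qed.

(* The growth rate against which the auxiliary tower is thinned: beyond [x], the
   next point must lie beyond all these exponents and half-mass ends. *)
Definition sparsity_rate (f : nat -> R) (n : nat) : nat :=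
  max (dyadic_exponent (f n)) (half_mass_end f n).

Lemma to_nat_le_compat x y x' y' :
  (x <= x')%nat -> (y <= y')%nat -> (to_nat (x, y) <= to_nat (x', y'))%nat.
Proof.
  intros Hx Hy. pose proof (to_nat_spec x y). pose proof (to_nat_spec x' y').
  assert ((y + x) * S (y + x) <= (y' + x') * S (y' + x'))%nat by (apply Nat.mul_le_mono; lia).
  lia.
Qed.

Fixpoint list_code (l : list nat) : nat :=
  match l with nil => O | x :: l' => S (to_nat (x, list_code l')) end.

Lemma list_code_inj l1 l2 : list_code l1 = list_code l2 -> l1 = l2.
Proof.
  revert l2. induction l1 as [|x l1 IH]; intros [|y l2]; cbn [list_code]; intros H;
    try discriminate; auto.
  apply eq_add_S, to_nat_inj in H. injection H as -> H. f_equal. apply IH, H.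
Qed.

Lemma list_code_bounded L D : exists B, forall p,
  (length p <= L)%nat -> (forall x, In x p -> (x <= D)%nat) -> (list_code p <= B)%nat.
Proof.
  induction L as [|L [B HB]].
  - exists O. intros [|x p] Hl _; simpl in *; lia.
  - exists (S (to_nat (D, B))). intros [|x p] Hl Hx; simpl in *; [lia|].
    apply le_n_S, to_nat_le_compat; [apply Hx; auto | apply HB; auto; lia].
Qed.

Definition code (k : nat) (p : list nat) : nat := to_nat (k, list_code p).

Lemma code_inj k1 p1 k2 p2 : code k1 p1 = code k2 p2 -> k1 = k2 /\ p1 = p2.
Proof.
  unfold code. intros H. apply to_nat_inj in H. injection H as -> H.
  split; [reflexivity|]. apply list_code_inj, H.
Qed.

Lemma code_ge k p : (k <= code k p)%nat.
Proof. unfold code. pose proof (to_nat_non_decreasing k (list_code p)). lia. Qed.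

Lemma nth_map_seq (g : nat -> nat) L t d : (t < L)%nat -> nth t (map g (seq 0 L)) d = g t.
Proof.
  intros Ht. rewrite nth_indep with (d' := g O) by (rewrite length_map, length_seq; lia).
  rewrite map_nth, seq_nth by lia. reflexivity.
Qed.

Section Patterns.
Variable z : nat -> nat.
Hypothesis Hz : block_partition z.

(* A pattern for block [k] lists exponents [p_t], standing for the values [2^-p_t]
   on that block. *)
Definition pattern_cap (k : nat) : nat := z (S (S k)).

Definition valid_pattern (k : nat) (p : list nat) : Prop :=
  length p = block_len z k /\ (forall x, In x p -> (x <= pattern_cap k)%nat) /\
  1/2 <= psum (fun t => (1/2)^(nth t p O)) (length p).

Definition fits (F : nat -> R) (k : nat) (p : list nat) : Prop :=
  forall t, (t < block_len z k)%nat -> (1/2)^(nth t p O) <= F (z k + t)%nat.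

Definition pattern_set (F : nat -> R) (m : nat) : Prop :=
  exists k p, m = code k p /\ valid_pattern k p /\ fits F k p.

Lemma valid_codes_bounded K :
  exists B, forall k p, (k < K)%nat -> valid_pattern k p -> (code k p <= B)%nat.
Proof.
  destruct (list_code_bounded (z K) (z (S K))) as [B HB].
  exists (to_nat (K, B)). intros k p Hk [Hl [Hcap _]]. unfold code.
  apply to_nat_le_compat; [lia|]. apply HB.
  - rewrite Hl. unfold block_len. pose proof (block_partition_le z Hz (S k) K Hk). lia.
  - intros x Hx. pose proof (block_partition_le z Hz (S (S k)) (S K) ltac:(lia)).
    specialize (Hcap x Hx). unfold pattern_cap in Hcap. lia.
Qed.

Lemma pattern_set_block_ge F W K : infinite_subset W -> subset_star W (pattern_set F) ->
  exists k p, (K <= k)%nat /\ W (code k p) /\ valid_pattern k p /\ fits F k p.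
Proof.
  intros HW [M HM]. destruct (valid_codes_bounded K) as [B HB].
  destruct (HW (max M (S B))) as [m [Hm Wm]].
  assert (HX : pattern_set F m) by (apply NNPP; intros Hn; specialize (HM _ Wm Hn); lia).
  destruct HX as [k [p [-> [Hv Hf]]]]. exists k, p.
  split; [|auto]. apply Nat.nlt_ge. intros Hk. specialize (HB k p Hk Hv). lia.
Qed.

Lemma pattern_set_mono F G : seq_le_star G F -> subset_star (pattern_set G) (pattern_set F).
Proof.
  intros [N HN]. destruct (valid_codes_bounded N) as [B HB].
  exists (S B). intros m [k [p [-> [Hv Hf]]]] Hnot.
  destruct (Compare_dec.le_lt_dec N k) as [Hk|Hk].
  - exfalso. apply Hnot. exists k, p. split; [reflexivity|split; [exact Hv|]].
    intros t Ht. eapply Rle_trans; [apply Hf, Ht|]. apply HN.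
    pose proof (block_partition_ge z Hz k). lia.
  - specialize (HB k p Hk Hv). lia.
Qed.

Definition controlled (F : nat -> R) (N : nat) : Prop :=
  forall k, (1 <= k)%nat -> (N <= k)%nat ->
    (forall n, (z k <= n < z (S k))%nat -> (dyadic_exponent (F n) <= pattern_cap k)%nat) /\
    (half_mass_end F (z k) <= z (S k))%nat.

Lemma controlled_of_sparse F Z : (forall k, Z (z (S k))) ->
  sparse (sparsity_rate F) Z -> exists N, controlled F N.
Proof.
  intros HZ [N HN]. exists N. intros k Hk1 HkN.
  pose proof (block_partition_ge z Hz k).
  pose proof (block_partition_lt z Hz k (S k) ltac:(lia)).
  pose proof (block_partition_lt z Hz (S k) (S (S k)) ltac:(lia)).
  assert (Zk : Z (z k)) by (destruct k as [|k]; [lia|apply HZ]).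
  unfold sparsity_rate, pattern_cap in *. split.
  - intros n Hn. pose proof (HN (z (S k)) (z (S (S k))) ltac:(lia) (HZ k) (HZ (S k))
      ltac:(lia) n ltac:(lia)). lia.
  - pose proof (HN (z k) (z (S k)) ltac:(lia) Zk (HZ k) ltac:(lia) (z k) ltac:(lia)). lia.
Qed.

Definition dyadic_pattern (F : nat -> R) (k : nat) : list nat :=
  map (fun t => dyadic_exponent (F (z k + t)%nat)) (seq 0 (block_len z k)).

Lemma dyadic_pattern_valid F N k : c0plus_not_l1 F -> controlled F N ->
  (1 <= k)%nat -> (N <= k)%nat ->
  valid_pattern k (dyadic_pattern F k) /\ fits F k (dyadic_pattern F k).
Proof.
  intros HF HN Hk1 HkN. destruct (HN k Hk1 HkN) as [Hcap Hend].
  pose proof (block_partition_lt z Hz k (S k) ltac:(lia)).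
  assert (Hlen : length (dyadic_pattern F k) = block_len z k)
    by (unfold dyadic_pattern; rewrite length_map, length_seq; reflexivity).
  assert (Hnth : forall t, (t < block_len z k)%nat ->
            nth t (dyadic_pattern F k) O = dyadic_exponent (F (z k + t)%nat))
    by (intros; apply nth_map_seq; assumption).
  split; [split; [exact Hlen|split]|].
  - intros x Hx. unfold dyadic_pattern in Hx. apply in_map_iff in Hx as [t [<- Ht]].
    apply in_seq in Ht. apply Hcap. unfold block_len in Ht. lia.
  - rewrite Hlen, (psum_ext _ (fun t => dyadic_floor F (z k + t)%nat))
      by (intros t Ht; rewrite Hnth by exact Ht; reflexivity).
    destruct (half_mass_end_spec F (z k) HF) as [_ Hm]. eapply Rle_trans; [exact Hm|].
    apply psum_le_len; [intros; apply Rlt_le, dyadic_floor_pos|]. unfold block_len. lia.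
  - intros t Ht. rewrite Hnth by exact Ht. apply dyadic_exponent_spec, HF.
Qed.

Lemma pattern_set_infinite F N : c0plus_not_l1 F -> controlled F N ->
  infinite_subset (pattern_set F).
Proof.
  intros HF HN M. set (k := max 1 (max M N)).
  destruct (dyadic_pattern_valid F N k HF HN ltac:(lia) ltac:(lia)) as [Hv Hf].
  exists (code k (dyadic_pattern F k)). split.
  - pose proof (code_ge k (dyadic_pattern F k)). lia.
  - exists k, (dyadic_pattern F k). auto.
Qed.

Definition realized (W : nat -> Prop) (k : nat) (p : list nat) : Prop :=
  W (code k p) /\ valid_pattern k p.

Definition pattern_glue (W : nat -> Prop) : nat -> R :=
  glue z (fun k t =>
    if excluded_middle_informative (exists p, realized W k p)
    then (1/2)^(nth t (epsilon (inhabits nil) (realized W k)) O)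
    else (1/2)^(pattern_cap k)).

Lemma pattern_glue_pos W n : 0 < pattern_glue W n.
Proof. unfold pattern_glue, glue. destruct excluded_middle_informative; apply half_pow_pos. Qed.

Lemma pattern_glue_le_star F N W : (forall n, 0 < F n) -> controlled F N ->
  subset_star W (pattern_set F) -> seq_le_star (pattern_glue W) F.
Proof.
  intros HFp HN [M HM]. exists (z (max 1 (max M N))). intros n Hn.
  pose proof (block_of_ge z Hz _ n Hn) as Hk. pose proof (block_of_spec z Hz n).
  set (k := block_of z n) in *. replace n with (z k + (n - z k))%nat by lia.
  unfold pattern_glue. rewrite glue_block by (exact Hz || (unfold block_len; lia)).
  destruct excluded_middle_informative as [Hex|Hno].
  - destruct (epsilon_spec (inhabits nil) (realized W k) Hex) as [HWk _].
    set (p := epsilon (inhabits nil) (realized W k)) in *.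
    assert (HX : pattern_set F (code k p)).
    { apply NNPP. intros Hn2. specialize (HM _ HWk Hn2). pose proof (code_ge k p). lia. }
    destruct HX as [k' [p' [Heq [_ Hfit]]]]. apply code_inj in Heq as [<- <-].
    apply Hfit. unfold block_len. lia.
  - destruct (HN k ltac:(lia) ltac:(lia)) as [Hcap _].
    apply Rle_trans with ((1/2)^(dyadic_exponent (F (z k + (n - z k))%nat))).
    + apply half_pow_le, Hcap. lia.
    + apply dyadic_exponent_spec, HFp.
Qed.

Lemma pattern_glue_not_summable F W : infinite_subset W ->
  subset_star W (pattern_set F) -> ~ exists l, infinite_sum (pattern_glue W) l.
Proof.
  intros HW HWF. apply (glue_not_summable z Hz _ (1/2)).
  - intros k t. destruct excluded_middle_informative; apply Rlt_le, half_pow_pos.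
  - lra.
  - intros K. destruct (pattern_set_block_ge F W K HW HWF) as [k [p [Hk [HWk [Hv _]]]]].
    exists k. split; [exact Hk|].
    assert (Hex : exists p, realized W k p) by (exists p; split; assumption).
    destruct (epsilon_spec (inhabits nil) (realized W k) Hex) as [_ [Hl [_ Hmass]]].
    rewrite (psum_ext _ (fun t => (1/2)^(nth t (epsilon (inhabits nil) (realized W k)) O))).
    + rewrite <- Hl. exact Hmass.
    + intros t _. destruct excluded_middle_informative; [reflexivity|contradiction].
Qed.

End Patterns.

Definition points_of (Z : nat -> Prop) (k : nat) : nat :=
  match k with O => O | S k => thin_enum (fun _ => O) Z k end.

Lemma points_of_partition Z : infinite_subset Z -> block_partition (points_of Z).
Proof.
  intros HZ. split; [reflexivity|]. intros [|k]; cbn [points_of].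
  - apply (next_above_spec (fun _ => O) Z HZ O).
  - apply thin_enum_lt_S, HZ.
Qed.

Lemma points_of_in Z : infinite_subset Z -> forall k, Z (points_of Z (S k)).
Proof. intros HZ k. apply (thin_enum_in (fun _ => O) Z HZ). Qed.

Lemma lower_bound_of_pattern_pseudo_intersection (I : Type) (f : I -> nat -> R) z W :
  block_partition z -> (forall i, c0plus_not_l1 (f i)) ->
  (forall i, exists N, controlled z (f i) N) ->
  infinite_subset W -> (forall i, subset_star W (pattern_set z (f i))) ->
  exists b, c0plus_not_l1 b /\ forall i, seq_le_star b (f i).
Proof.
  intros Hz Hf Hctrl HW HWs.
  assert (Hle : forall i, seq_le_star (pattern_glue z W) (f i)).
  { intros i. destruct (Hctrl i) as [N HN].
    apply (pattern_glue_le_star z Hz (f i) N); [apply Hf | exact HN | apply HWs]. }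
  destruct (classic (inhabited I)) as [[i0]|HnoI].
  - exists (pattern_glue z W). split; [split; [|split]|exact Hle].
    + apply pattern_glue_pos.
    + apply (Un_cv0_le_star _ (f i0)); [apply pattern_glue_pos | apply Hle | apply Hf].
    + apply (pattern_glue_not_summable z Hz (f i0)); [exact HW | apply HWs].
  - exists (set_seq (fun _ => True)). split.
    + apply set_seq_c0plus_not_l1. intros N. exists N. auto.
    + intros i. exfalso. apply HnoI. constructor. exact i.
Qed.

Lemma set_tower_of_sparse_pseudo_intersection (I : Type) (lt : I -> I -> Prop)
  (f : I -> nat -> R) Z :
  strict_wellorder I lt -> (forall i, c0plus_not_l1 (f i)) ->
  (forall i j, lt i j -> seq_le_star (f j) (f i)) ->
  ~ (exists b, c0plus_not_l1 b /\ forall i, seq_le_star b (f i)) ->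
  infinite_subset Z -> (forall i, sparse (sparsity_rate (f i)) Z) ->
  set_tower_of_size I.
Proof.
  intros Hwo Hf Hdec Hnob HZ HZs.
  set (z := points_of Z). assert (Hz : block_partition z) by apply points_of_partition, HZ.
  assert (Hctrl : forall i, exists N, controlled z (f i) N)
    by (intros i; apply (controlled_of_sparse z Hz (f i) Z (points_of_in Z HZ) (HZs i))).
  destruct (classic (exists W, infinite_subset W /\
                      forall i, subset_star W (pattern_set z (f i)))) as [[W [HW HWs]]|Hno].
  - exfalso. apply Hnob, (lower_bound_of_pattern_pseudo_intersection I f z W); assumption.
  - exists I, lt. split; [exact Hwo|split].
    + exists (fun i => pattern_set z (f i)). split; [|split].
      * intros i. destruct (Hctrl i) as [N HN]. apply (pattern_set_infinite z Hz (f i) N (Hf i) HN).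
      * intros i j Hij. apply (pattern_set_mono z Hz), Hdec, Hij.
      * exact Hno.
    + exists (fun i => i). auto.
Qed.

Lemma tower_le_seqs_sets :
  tower_le (nat -> R) c0plus_not_l1 seq_le_star (nat -> Prop) infinite_subset subset_star.
Proof.
  intros I lt Hwo [f [Hf [Hdec Hnob]]].
  destruct (set_tower_or_sparse_pseudo_intersection I lt (fun i => sparsity_rate (f i)) Hwo)
    as [Htower|[Z [HZ HZs]]].
  - exact Htower.
  - apply (set_tower_of_sparse_pseudo_intersection I lt f Z); assumption.
Qed.

Theorem mainTheorem6 :
  tower_num_eq (nat -> R) c0plus_not_l1 seq_le_star
               (nat -> Prop) infinite_subset subset_star.
Proof. split; [apply tower_le_seqs_sets | apply tower_le_sets_seqs]. Qed.
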